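(* Let $X$ be a real Banach space, $x \in S(X)$ and $0<t<2$. Suppose there exist $f \in S(X^* )$ and $\alpha \in (0,1)$ such that $x \in S := S(B(X), f, \alpha)$ and $\operatorname{diam}(S) < t/5$. Then \[ s(x, f, t) \geq \min\left\{\frac{f(x) - \alpha}{\alpha}, \frac{t}{20}\right\} > 0. \]
   Context: $B(X)$ is the closed unit ball and $S(X)$ the unit sphere of $X$; $X^*$ is the dual space. For $f \in S(X^* )$ and real $\alpha$, the slice is $S(B(X), f, \alpha) := \{y \in B(X) : f(y) > \alpha\}$. For $0<t<2$, $f \in S(X^* )$ and $x \in S(X)$, define $s(x,f,t) := \inf\{\|x+y\| - 1 : y \in \ker f,\ \|y\| \geq t/4\}$. *)

From HB Require Import structures.
From mathcomp Require Import all_boot all_order all_algebra.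
From mathcomp Require Import all_classical all_reals all_analysis.
Set Implicit Arguments. Unset Strict Implicit. Unset Printing Implicit Defensive.
Import Order.TTheory GRing.Theory Num.Theory.
Import numFieldNormedType.Exports.
Local Open Scope classical_set_scope.
Local Open Scope ring_scope.

Section Banach.
Variables (R : realType) (X : normedModType R).

Definition unit_ball : set X := [set y | `|y| <= 1].
Definition unit_sphere : set X := [set y | `|y| = 1].

Definition is_dual (f : X -> R) : Prop :=
  (forall (a : R) (u v : X), f (a *: u + v) = a * f u + f v) /\ continuous f.

Definition dual_norm (f : X -> R) : R := sup [set `|f y| | y in unit_ball].

Definition in_dual_sphere (f : X -> R) : Prop := is_dual f /\ dual_norm f = 1.

Definition slice (f : X -> R) (alpha : R) : set X :=
  [set y | y \in unit_ball /\ alpha < f y].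

Definition diam (A : set X) : R :=
  sup [set `|y - z| | y in A & z in A].

(* s(x,f,t) = inf { ||x+y|| - 1 : y in ker f, ||y|| >= t/4 }, in the extended
   reals (infimum of the empty set is +oo) *)
Definition s_fun (x : X) (f : X -> R) (t : R) : \bar R :=
  ereal_inf [set ((`|x + y| - 1)%:E)%E | y in [set y | f y = 0 /\ t / 4 <= `|y|]].

End Banach.

(* Take y in ker f with ||y|| >= t/4 and put u := x + y, so f u = f x > alpha.
   If ||u|| <= 1 then u lies in the slice and ||y|| = ||u - x|| <= diam S < t/5,
   which is impossible.  Otherwise u/||u|| lies in the slice as soon as
   ||u|| - 1 < (f x - alpha)/alpha, and then
   ||y|| <= ||u - u/||u|| || + ||u/||u|| - x|| <= (||u|| - 1) + diam S,
   forcing ||u|| - 1 > t/4 - t/5 = t/20. *)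
From HB Require Import structures.
From mathcomp Require Import all_boot all_order all_algebra.
From mathcomp Require Import all_classical all_reals all_analysis.
From mathcomp Require Import lra.
Set Implicit Arguments. Unset Strict Implicit. Unset Printing Implicit Defensive.
Import Order.TTheory GRing.Theory Num.Theory.
Import numFieldNormedType.Exports.
Local Open Scope classical_set_scope.
Local Open Scope ring_scope.

Section Slices.
Variables (R : realType) (X : normedModType R).

Lemma le_diam (A : set X) (p q : X) :
  A `<=` @unit_ball R X -> A p -> A q -> `|p - q| <= diam A.
Proof.
move=> A_ball Ap Aq; apply: ub_le_sup; last by exists p => //; exists q.
exists 2 => _ [p' /A_ball p'1 [q' /A_ball q'1 <-]].
by apply: (le_trans (ler_normB _ _)); rewrite -[2]/(1 + 1) lerD.
Qed.

Lemma norm_subr_le_normalize (u v : X) :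
  `|u - v| <= `|(`|u| - 1)| + `|(`|u|^-1 *: u - v)|.
Proof.
have -> : u - v = (u - `|u|^-1 *: u) + (`|u|^-1 *: u - v) by rewrite addrA subrK.
apply: (le_trans (ler_normD _ _)); rewrite lerD2r.
have [->|u0] := eqVneq u 0; first by rewrite scaler0 subr0 normr0 normr_ge0.
rewrite -{1}[u]scale1r -scalerBl normrZ -[X in _ * X]normr_id -normrM.
by rewrite mulrBl mul1r mulVf ?normr_eq0.
Qed.

Variables (f : X -> R) (alpha : R).
Hypothesis f_linear : forall (a : R) (u v : X), f (a *: u + v) = a * f u + f v.

Let f0 : f 0 = 0.
Proof. by have := f_linear 1 0 0; rewrite scaler0 addr0 mul1r => ?; lra. Qed.

Let fD (u v : X) : f (u + v) = f u + f v.
Proof. by rewrite -[u]scale1r f_linear mul1r scale1r. Qed.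

Let fZ (a : R) (u : X) : f (a *: u) = a * f u.
Proof. by rewrite -[a *: u]addr0 f_linear f0 addr0. Qed.

Lemma slice_sub_ball : slice f alpha `<=` @unit_ball R X.
Proof. by move=> y [/[!inE]]. Qed.

Lemma slice_normalize (u : X) :
  1 <= `|u| -> alpha * `|u| < f u -> slice f alpha (`|u|^-1 *: u).
Proof.
move=> u_ge1 fu; have u_gt0 : 0 < `|u| by apply: lt_le_trans u_ge1.
split.
  by rewrite inE /unit_ball /= normrZ ger0_norm ?invr_ge0 // mulVf ?gt_eqF.
by rewrite fZ mulrC ltr_pdivlMr.
Qed.

Lemma ker_norm_le_diam (x y : X) :
  slice f alpha x -> f y = 0 -> `|x + y| <= 1 -> `|y| <= diam (slice f alpha).
Proof.
move=> xS fy xy1.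
have xyS : slice f alpha (x + y).
  by split; [rewrite inE | rewrite fD fy addr0; case: xS].
by have := le_diam slice_sub_ball xyS xS; rewrite addrC addKr.
Qed.

Lemma ker_norm_le_diam_normalize (x y : X) :
  slice f alpha x -> f y = 0 -> 1 <= `|x + y| -> alpha * `|x + y| < f x ->
  `|y| <= `|x + y| - 1 + diam (slice f alpha).
Proof.
move=> xS fy xy1 fxy.
have := norm_subr_le_normalize (x + y) x.
rewrite addrC addKr ger0_norm ?subr_ge0 // => /le_trans; apply.
rewrite lerD2l; apply: le_diam slice_sub_ball _ xS.
by apply: slice_normalize; rewrite // fD fy addr0.
Qed.

End Slices.

Theorem mainTheorem1 (R : realType) (X : completeNormedModType R) (x : X) (t : R) :
  x \in @unit_sphere R X -> 0 < t < 2 ->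
  forall (f : X -> R) (alpha : R),
    in_dual_sphere f -> 0 < alpha < 1 ->
    x \in slice f alpha ->
    diam (slice f alpha) < t / 5 ->
    ((Num.min ((f x - alpha) / alpha) (t / 20))%:E <= s_fun x f t)%E /\
    0 < Num.min ((f x - alpha) / alpha) (t / 20).
Proof.
move=> _ /andP[t0 _] f alpha [[f_linear _] _] /andP[a0 _].
rewrite inE => xS diamS; have [_ fxa] := xS.
split; last by rewrite lt_min divr_gt0 ?subr_gt0 //=; lra.
apply/ereal_infP => _ [y [fy ty] <-]; rewrite lee_fin.
have [xy_le1|xy_gt1] := leP `|x + y| 1.
  by have := ker_norm_le_diam f_linear xS fy xy_le1; lra.
rewrite ge_min; have [xy_small|//] := ltP (`|x + y| - 1) ((f x - alpha) / alpha).
have fxy : alpha * `|x + y| < f x.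
  by move: xy_small; rewrite ltr_pdivlMr // mulrBl mul1r ltrD2r mulrC.
have := ker_norm_le_diam_normalize f_linear xS fy (ltW xy_gt1) fxy.
by move=> y_le; apply/orP; right; lra.
Qed.
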